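(* Let $\Xi\to C$ be a sequent without stoups (regarded, in the context of $\mathcal{M}'_{2018}$, as a sequent all of whose stoups are empty). Then the following are equivalent: (1) $\Xi\to C$ is derivable in $\mathcal{F}_{2018}$ without cut; (2) $\Xi\to C$ is derivable in $\mathcal{F}_{2018}$, possibly using cut; (3) $\Xi\to C$ is derivable in $\mathcal{M}'_{2018}$ extended with the stoup cut rule; (4) $\Xi\to C$ is derivable in $\mathcal{M}'_{2018}$ (without cut). The same equivalence holds with $\mathcal{F}^{-}_{2018}$ in place of $\mathcal{F}_{2018}$ and $\mathcal{M}'^{-}_{2018}$ in place of $\mathcal{M}'_{2018}$.
   Context: Formulae are built from a countable set of variables and $\mathbf1$ by $\backslash,/,\cdot,\wedge,\vee$ and the unary $\langle\rangle$, $[]^{-1}$, $!$. Calculi with stoups: a stoup is a finite multiset of formulae ($\varnothing$ empty); a tree term is a formula or $[\Xi]$; a meta-formula is $\zeta;\Gamma$ ($\zeta$ a stoup, $\Gamma$ a finite sequence of tree terms, empty $\Lambda$), $\varnothing;\Gamma$ written $\Gamma$; comma is concatenation / multiset union; sequents $\Xi\to C$; $\Xi(\Theta)$ designates an occurrence of a meta-formula $\Theta$ which is $\Xi$ itself or the content of a bracket $[\Theta]$ at any depth. Rules of $\mathcal{M}'_{2018}$: axioms $A\to A$, $\Lambda\to\mathbf1$; ($/L$) from $\zeta_1;\Gamma\to B$ and $\Xi(\zeta_2;\Delta_1,C,\Delta_2)\to D$ infer $\Xi(\zeta_1,\zeta_2;\Delta_1,C/B,\Gamma,\Delta_2)\to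 D$; ($/R$) from $\zeta;\Gamma,B\to C$ infer $\zeta;\Gamma\to C/B$; ($\backslash L$) from $\zeta_1;\Gamma\to A$ and $\Xi(\zeta_2;\Delta_1,C,\Delta_2)\to D$ infer $\Xi(\zeta_1,\zeta_2;\Delta_1,\Gamma,A\backslash C,\Delta_2)\to D$; ($\backslash R$) from $\zeta;A,\Gamma\to C$ infer $\zeta;\Gamma\to A\backslash C$; ($\cdot L$) from $\Xi(\zeta;\Delta_1,A,B,\Delta_2)\to D$ infer $\Xi(\zeta;\Delta_1,A\cdot B,\Delta_2)\to D$; ($\cdot R$) from $\zeta_1;\Delta\to A$, $\zeta_2;\Gamma\to B$ infer $\zeta_1,\zeta_2;\Delta,\Gamma\to A\cdot B$; ($\mathbf1L$) from $\Xi(\zeta;\Delta_1,\Delta_2)\to A$ infer $\Xi(\zeta;\Delta_1,\mathbf1,\Delta_2)\to A$; ($\vee L$) from $\Xi(\zeta;\Delta_1,A_1,\Delta_2)\to C$ and $\Xi(\zeta;\Delta_1,A_2,\Delta_2)\to C$ infer $\Xi(\zeta;\Delta_1,A_1\vee A_2,\Delta_2)\to C$; ($\vee R_i$) from $\Xi\to A_i$ infer $\Xi\to A_1\vee A_2$; ($\wedge L_i$) from $\Xi(\zeta;\Delta_1,A_i,\Delta_2)\to C$ infer $\Xi(\zeta;\Delta_1,A_1\wedge A_2,\Delta_2)\to C$; ($\wedge R$) from $\Xi\to A_1$ and $\Xi\to A_2$ infer $\Xi\to A_1\wedge A_2$; ($[]^{-1}L$) from $\Xi(\zeta;\Delta_1,A,\Delta_2)\to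 B$ infer $\Xi(\zeta;\Delta_1,[[]^{-1}A],\Delta_2)\to B$; ($[]^{-1}R$) from $[\Xi]\to A$ infer $\Xi\to[]^{-1}A$; ($\langle\rangle L$) from $\Xi(\zeta;\Delta_1,[A],\Delta_2)\to B$ infer $\Xi(\zeta;\Delta_1,\langle\rangle A,\Delta_2)\to B$; ($\langle\rangle R$) from $\Xi\to A$ infer $[\Xi]\to\langle\rangle A$; ($!L$) from $\Xi(\zeta,A;\Gamma_1,\Gamma_2)\to B$ infer $\Xi(\zeta;\Gamma_1,!A,\Gamma_2)\to B$; ($!P$) from $\Xi(\zeta;\Gamma_1,A,\Gamma_2)\to B$ infer $\Xi(\zeta,A;\Gamma_1,\Gamma_2)\to B$; ($!R'$) from $A;\Lambda\to B$ infer $A;\Lambda\to!B$; ($!C'$) from $\Xi(\zeta,A;\Gamma_1,[\zeta',A;\Gamma_2],\Gamma_3)\to B$ infer $\Xi(\zeta,A;\Gamma_1,[[\zeta';\Gamma_2]],\Gamma_3)\to B$. $\mathcal{M}'^{-}_{2018}$ is $\mathcal{M}'_{2018}$ restricted to formulae without $\mathbf1$, without $\Lambda\to\mathbf1$ and $\mathbf1L$, with $\backslash R,/R$ only if $\Gamma\ne\Lambda$ or $\zeta\ne\varnothing$, and $!C'$ only if $\Gamma_2\ne\Lambda$ or $\zeta'\neq\varnothing$. The stoup cut rule is: from $\xi;\Pi\to A$ and $\Xi(\zeta;\Gamma_1,A,\Gamma_2)\to C$ infer $\Xi(\xi,\zeta;\Gamma_1,\Pi,\Gamma_2)\to C$.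 Stoup-free calculi: meta-formulae are finite sequences of tree terms (all stoups empty); rules of $\mathcal{F}_{2018}$ are the stoup-free versions of the rules above other than $!L,!P,!R',!C'$ (drop all stoups), together with ($!L$) from $\Xi(\Delta_1,A,\Delta_2)\to C$ infer $\Xi(\Delta_1,!A,\Delta_2)\to C$; ($!P_1$) from $\Xi(\Delta_1,!A,\Phi,\Delta_2)\to C$ infer $\Xi(\Delta_1,\Phi,!A,\Delta_2)\to C$; ($!P_2$) the converse; ($!R$) from $!A\to B$ infer $!A\to!B$; ($!C$) from $\Xi(!A,\Gamma_1,[!A,\Gamma_2],\Gamma_3)\to C$ infer $\Xi(!A,\Gamma_1,[[\Gamma_2]],\Gamma_3)\to C$; and the cut rule: from $\Pi\to A$ and $\Xi(\Gamma_1,A,\Gamma_2)\to C$ infer $\Xi(\Gamma_1,\Pi,\Gamma_2)\to C$. $\mathcal{F}^{-}_{2018}$ is $\mathcal{F}_{2018}$ restricted to formulae without $\mathbf1$, without $\Lambda\to\mathbf1$ and $\mathbf1L$, with $\backslash R,/R$ only if $\Gamma\neq\Lambda$, and $!C$ only if $\Gamma_2\neq\Lambda$. *)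

From Stdlib Require Import List Bool Permutation.
Import ListNotations.

Inductive formula : Type :=
| Var   (n : nat)
| One
| Under (A C : formula)
| Over  (C B : formula)
| Prod  (A B : formula)
| Meet  (A B : formula)
| Join  (A B : formula)
| Dia   (A : formula)
| BoxInv (A : formula)
| Bang  (A : formula).

Fixpoint ofree (A : formula) : bool :=
  match A with
  | Var _ => true
  | One => false
  | Under A B | Over A B | Prod A B | Meet A B | Join A B => ofree A && ofree B
  | Dia A | BoxInv A | Bang A => ofree A
  end.

Inductive ftm : Type :=
| FF (A : formula)
| FB (G : list ftm).

Definition fmeta := list ftm.
Definition fseq := (fmeta * formula)%type.

(* Xi(Theta): Theta is Xi itself, or the content of a bracket at any depth *)
Inductive fctx : Type :=
| FHole
| FIn (G1 : list ftm) (c : fctx) (G2 : list ftm).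

Fixpoint fplug (c : fctx) (T : fmeta) : fmeta :=
  match c with
  | FHole => T
  | FIn G1 c' G2 => G1 ++ FB (fplug c' T) :: G2
  end.

Fixpoint ftm_ofree (t : ftm) : bool :=
  match t with
  | FF A => ofree A
  | FB G => forallb ftm_ofree G
  end.

Definition fseq_ofree (s : fseq) : bool := forallb ftm_ofree (fst s) && ofree (snd s).

(* Rules of F_2018 (cut = true adds the cut rule; minus = true gives F^-_2018).
   [frule cut minus ps c] : c follows from premises ps by one rule instance. *)
Inductive frule (cut minus : bool) : list fseq -> fseq -> Prop :=
| f_ax A : frule cut minus [] ([FF A], A)
| f_one : minus = false -> frule cut minus [] ([], One)
| f_overL c G B D1 C D2 D :
    frule cut minus [(G, B); (fplug c (D1 ++ FF C :: D2), D)]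
                    (fplug c (D1 ++ FF (Over C B) :: G ++ D2), D)
| f_overR G B C : (minus = true -> G <> []) ->
    frule cut minus [(G ++ [FF B], C)] (G, Over C B)
| f_underL c G A D1 C D2 D :
    frule cut minus [(G, A); (fplug c (D1 ++ FF C :: D2), D)]
                    (fplug c (D1 ++ G ++ FF (Under A C) :: D2), D)
| f_underR G A C : (minus = true -> G <> []) ->
    frule cut minus [(FF A :: G, C)] (G, Under A C)
| f_prodL c D1 A B D2 D :
    frule cut minus [(fplug c (D1 ++ FF A :: FF B :: D2), D)]
                    (fplug c (D1 ++ FF (Prod A B) :: D2), D)
| f_prodR D A G B :
    frule cut minus [(D, A); (G, B)] (D ++ G, Prod A B)
| f_oneL c D1 D2 A : minus = false ->
    frule cut minus [(fplug c (D1 ++ D2), A)] (fplug c (D1 ++ FF One :: D2), A)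
| f_joinL c D1 A1 A2 D2 C :
    frule cut minus [(fplug c (D1 ++ FF A1 :: D2), C); (fplug c (D1 ++ FF A2 :: D2), C)]
                    (fplug c (D1 ++ FF (Join A1 A2) :: D2), C)
| f_joinR1 X A1 A2 : frule cut minus [(X, A1)] (X, Join A1 A2)
| f_joinR2 X A1 A2 : frule cut minus [(X, A2)] (X, Join A1 A2)
| f_meetL1 c D1 A1 A2 D2 C :
    frule cut minus [(fplug c (D1 ++ FF A1 :: D2), C)] (fplug c (D1 ++ FF (Meet A1 A2) :: D2), C)
| f_meetL2 c D1 A1 A2 D2 C :
    frule cut minus [(fplug c (D1 ++ FF A2 :: D2), C)] (fplug c (D1 ++ FF (Meet A1 A2) :: D2), C)
| f_meetR X A1 A2 : frule cut minus [(X, A1); (X, A2)] (X, Meet A1 A2)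
| f_boxinvL c D1 A D2 B :
    frule cut minus [(fplug c (D1 ++ FF A :: D2), B)]
                    (fplug c (D1 ++ FB [FF (BoxInv A)] :: D2), B)
| f_boxinvR X A : frule cut minus [([FB X], A)] (X, BoxInv A)
| f_diaL c D1 A D2 B :
    frule cut minus [(fplug c (D1 ++ FB [FF A] :: D2), B)]
                    (fplug c (D1 ++ FF (Dia A) :: D2), B)
| f_diaR X A : frule cut minus [(X, A)] ([FB X], Dia A)
| f_bangL c D1 A D2 C :
    frule cut minus [(fplug c (D1 ++ FF A :: D2), C)] (fplug c (D1 ++ FF (Bang A) :: D2), C)
| f_bangP1 c D1 A P D2 C :
    frule cut minus [(fplug c (D1 ++ FF (Bang A) :: P ++ D2), C)]
                    (fplug c (D1 ++ P ++ FF (Bang A) :: D2), C)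
| f_bangP2 c D1 A P D2 C :
    frule cut minus [(fplug c (D1 ++ P ++ FF (Bang A) :: D2), C)]
                    (fplug c (D1 ++ FF (Bang A) :: P ++ D2), C)
| f_bangR A B : frule cut minus [([FF (Bang A)], B)] ([FF (Bang A)], Bang B)
| f_bangC c A G1 G2 G3 C : (minus = true -> G2 <> []) ->
    frule cut minus [(fplug c (FF (Bang A) :: G1 ++ FB (FF (Bang A) :: G2) :: G3), C)]
                    (fplug c (FF (Bang A) :: G1 ++ FB [FB G2] :: G3), C)
| f_cut P A c G1 G2 C : cut = true ->
    frule cut minus [(P, A); (fplug c (G1 ++ FF A :: G2), C)] (fplug c (G1 ++ P ++ G2), C).

Inductive fder (cut minus : bool) : fseq -> Prop :=
| fder_rule ps s :
    frule cut minus ps s ->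
    (forall p, In p ps -> fder cut minus p) ->
    (minus = true -> fseq_ofree s = true) ->
    fder cut minus s.

(* A stoup (finite multiset of formulae) is represented
   by a list; multiset identity is recovered by the rule m_perm below,
   which lets any stoup, at any depth, be replaced by a permutation of it. *)
Definition stoup := list formula.

Inductive tm : Type :=
| TF (A : formula)
| TB (z : stoup) (G : list tm).

Definition meta := (stoup * list tm)%type.
Definition mseq := (meta * formula)%type.

Inductive ctx : Type :=
| Hole
| In_ (z : stoup) (G1 : list tm) (c : ctx) (G2 : list tm).

Fixpoint plug (c : ctx) (T : meta) : meta :=
  match c with
  | Hole => T
  | In_ z G1 c' G2 => let (z', G') := plug c' T in (z, G1 ++ TB z' G' :: G2)
  end.

Fixpoint tm_ofree (t : tm) : bool :=
  match t with
  | TF A => ofree A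
  | TB z G => forallb ofree z && forallb tm_ofree G
  end.

Definition mseq_ofree (s : mseq) : bool :=
  forallb ofree (fst (fst s)) && forallb tm_ofree (snd (fst s)) && ofree (snd s).

Inductive mrule (cut minus : bool) : list mseq -> mseq -> Prop :=
| m_ax A : mrule cut minus [] (([], [TF A]), A)
| m_one : minus = false -> mrule cut minus [] (([], []), One)
| m_overL c z1 G B z2 D1 C D2 D :
    mrule cut minus [((z1, G), B); (plug c (z2, D1 ++ TF C :: D2), D)]
                    (plug c (z1 ++ z2, D1 ++ TF (Over C B) :: G ++ D2), D)
| m_overR z G B C : (minus = true -> G <> [] \/ z <> []) ->
    mrule cut minus [((z, G ++ [TF B]), C)] ((z, G), Over C B)
| m_underL c z1 G A z2 D1 C D2 D :
    mrule cut minus [((z1, G), A); (plug c (z2, D1 ++ TF C :: D2), D)]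
                    (plug c (z1 ++ z2, D1 ++ G ++ TF (Under A C) :: D2), D)
| m_underR z G A C : (minus = true -> G <> [] \/ z <> []) ->
    mrule cut minus [((z, TF A :: G), C)] ((z, G), Under A C)
| m_prodL c z D1 A B D2 D :
    mrule cut minus [(plug c (z, D1 ++ TF A :: TF B :: D2), D)]
                    (plug c (z, D1 ++ TF (Prod A B) :: D2), D)
| m_prodR z1 D A z2 G B :
    mrule cut minus [((z1, D), A); ((z2, G), B)] ((z1 ++ z2, D ++ G), Prod A B)
| m_oneL c z D1 D2 A : minus = false ->
    mrule cut minus [(plug c (z, D1 ++ D2), A)] (plug c (z, D1 ++ TF One :: D2), A)
| m_joinL c z D1 A1 A2 D2 C :
    mrule cut minus [(plug c (z, D1 ++ TF A1 :: D2), C); (plug c (z, D1 ++ TF A2 :: D2), C)]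
                    (plug c (z, D1 ++ TF (Join A1 A2) :: D2), C)
| m_joinR1 X A1 A2 : mrule cut minus [(X, A1)] (X, Join A1 A2)
| m_joinR2 X A1 A2 : mrule cut minus [(X, A2)] (X, Join A1 A2)
| m_meetL1 c z D1 A1 A2 D2 C :
    mrule cut minus [(plug c (z, D1 ++ TF A1 :: D2), C)]
                    (plug c (z, D1 ++ TF (Meet A1 A2) :: D2), C)
| m_meetL2 c z D1 A1 A2 D2 C :
    mrule cut minus [(plug c (z, D1 ++ TF A2 :: D2), C)]
                    (plug c (z, D1 ++ TF (Meet A1 A2) :: D2), C)
| m_meetR X A1 A2 : mrule cut minus [(X, A1); (X, A2)] (X, Meet A1 A2)
| m_boxinvL c z D1 A D2 B :
    mrule cut minus [(plug c (z, D1 ++ TF A :: D2), B)]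
                    (plug c (z, D1 ++ TB [] [TF (BoxInv A)] :: D2), B)
| m_boxinvR z G A : mrule cut minus [(([], [TB z G]), A)] ((z, G), BoxInv A)
| m_diaL c z D1 A D2 B :
    mrule cut minus [(plug c (z, D1 ++ TB [] [TF A] :: D2), B)]
                    (plug c (z, D1 ++ TF (Dia A) :: D2), B)
| m_diaR z G A : mrule cut minus [((z, G), A)] (([], [TB z G]), Dia A)
| m_bangL c z A G1 G2 B :
    mrule cut minus [(plug c (z ++ [A], G1 ++ G2), B)]
                    (plug c (z, G1 ++ TF (Bang A) :: G2), B)
| m_bangP c z A G1 G2 B :
    mrule cut minus [(plug c (z, G1 ++ TF A :: G2), B)]
                    (plug c (z ++ [A], G1 ++ G2), B)
| m_bangR A B : mrule cut minus [(([A], []), B)] (([A], []), Bang B)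
| m_bangC c z A G1 z' G2 G3 B : (minus = true -> G2 <> [] \/ z' <> []) ->
    mrule cut minus [(plug c (z ++ [A], G1 ++ TB (z' ++ [A]) G2 :: G3), B)]
                    (plug c (z ++ [A], G1 ++ TB [] [TB z' G2] :: G3), B)
| m_cut x P A c z G1 G2 C : cut = true ->
    mrule cut minus [((x, P), A); (plug c (z, G1 ++ TF A :: G2), C)]
                    (plug c (x ++ z, G1 ++ P ++ G2), C)
| m_perm c z z' G C : Permutation z z' ->
    mrule cut minus [(plug c (z, G), C)] (plug c (z', G), C).

Inductive mder (cut minus : bool) : mseq -> Prop :=
| mder_rule ps s :
    mrule cut minus ps s ->
    (forall p, In p ps -> mder cut minus p) ->
    (minus = true -> mseq_ofree s = true) ->
    mder cut minus s.

Fixpoint emb (t : ftm) : tm :=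
  match t with
  | FF A => TF A
  | FB G => TB [] (map emb G)
  end.

Definition emb_seq (s : fseq) : mseq := (([], map emb (fst s)), snd s).

(* (1) <-> (2) is cut elimination for F.  A cut on A is removed by induction on A and,
   inside, on the derivation of the left premise P -> A.  If that derivation ends with a left
   rule, the cut moves above it.  If it ends with the right rule for A, one walks up the
   right premise to the occurrence of A being cut, where the cut is traded for cuts on the
   immediate subformulae of A.  The exception is [!R]: a left premise [!A'] -> !B must
   replace at once all copies of !B that the right premise creates by [!P] and [!C], and
   each dereliction [!L] of such a copy becomes a cut on B.

   (2) <-> (3): an M'-derivation is read in F by writing every stoup as a row of
   !-formulae in front of its meta-formula, so that stoup bookkeeping becomes [!P]-moves.
   Conversely, an F-derivation of Xi -> C yields M'-derivations of every sequent obtained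
   from Xi by moving some !-formulae into the stoups of their brackets.  (3) <-> (4) goes
   through F: M' with cut, then F with cut, F without cut, and M' without cut. *)

From Stdlib Require Import List Bool Permutation Lia Btauto Wf_nat.
Import ListNotations.

Definition fmeta_ofree (L : fmeta) : bool := forallb ftm_ofree L.

Fixpoint fctx_ofree (c : fctx) : bool :=
  match c with
  | FHole => true
  | FIn G1 c G2 => fmeta_ofree G1 && fctx_ofree c && fmeta_ofree G2
  end.

Lemma fmeta_ofree_app L1 L2 : fmeta_ofree (L1 ++ L2) = fmeta_ofree L1 && fmeta_ofree L2.
Proof. apply forallb_app. Qed.

Lemma fmeta_ofree_cons t L : fmeta_ofree (t :: L) = ftm_ofree t && fmeta_ofree L.
Proof. reflexivity. Qed.

Lemma ftm_ofree_FB G : ftm_ofree (FB G) = fmeta_ofree G.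
Proof. reflexivity. Qed.

Lemma fmeta_ofree_plug c X : fmeta_ofree (fplug c X) = fctx_ofree c && fmeta_ofree X.
Proof.
  induction c as [|G1 c IH G2]; simpl; [reflexivity|].
  rewrite fmeta_ofree_app, fmeta_ofree_cons, ftm_ofree_FB, IH. btauto.
Qed.

Ltac ofree_simpl :=
  repeat (rewrite ?fmeta_ofree_app, ?fmeta_ofree_cons, ?fmeta_ofree_plug, ?ftm_ofree_FB in *;
          simpl ftm_ofree in *; simpl ofree in *).
Ltac andb_split := repeat match goal with
  | H : _ && _ = true |- _ => apply andb_true_iff in H; destruct H
  | |- _ && _ = true => apply andb_true_iff; split
  end.
Ltac ofree_auto := ofree_simpl; andb_split; try assumption; try reflexivity.

Section FmetaInd.
Variables (P : fmeta -> Prop) (P_nil : P [])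
  (P_FF : forall A L, P L -> P (FF A :: L))
  (P_FB : forall G L, P G -> P L -> P (FB G :: L)).

Fixpoint fmeta_cons_ind (t : ftm) : forall L, P L -> P (t :: L) :=
  match t with
  | FF A => P_FF A
  | FB G => fun L => P_FB G L
      ((fix F G := match G return P G with
                   | [] => P_nil
                   | t' :: G' => fmeta_cons_ind t' G' (F G')
                   end) G)
  end.

Lemma fmeta_nested_ind L : P L.
Proof. induction L; [exact P_nil | apply fmeta_cons_ind; assumption]. Qed.

End FmetaInd.

Fixpoint fctx_comp (c d : fctx) : fctx :=
  match c with FHole => d | FIn G1 c' G2 => FIn G1 (fctx_comp c' d) G2 end.

Lemma fplug_comp c d X : fplug (fctx_comp c d) X = fplug c (fplug d X).
Proof. induction c; simpl; congruence. Qed.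

Lemma fplug_flatten K E1 E2 c : exists K' E1' E2', forall X,
  fplug K (E1 ++ fplug c X ++ E2) = fplug K' (E1' ++ X ++ E2').
Proof.
  destruct c as [|H1 c H2].
  - exists K, E1, E2. reflexivity.
  - exists (fctx_comp K (FIn (E1 ++ H1) c (H2 ++ E2))), [], []. intros X.
    rewrite fplug_comp. simpl. rewrite app_nil_r, <- !app_assoc. reflexivity.
Qed.

Definition bangs (z : list formula) : fmeta := map (fun A => FF (Bang A)) z.

Lemma bangs_app z1 z2 : bangs (z1 ++ z2) = bangs z1 ++ bangs z2.
Proof. apply map_app. Qed.

Lemma fmeta_ofree_bangs z : fmeta_ofree (bangs z) = forallb ofree z.
Proof. unfold fmeta_ofree, bangs. induction z; simpl; congruence. Qed.

Lemma fder_ofree cut minus L C :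
  fder cut minus (L, C) -> minus = true -> fmeta_ofree L = true /\ ofree C = true.
Proof.
  intros H Hm. inversion H as [ps s _ _ Hof Hs]. subst s.
  apply andb_true_iff, (Hof Hm).
Qed.

Ltac ofree_from H := let Hm := fresh in
  intro Hm; destruct (fder_ofree _ _ _ _ H Hm); split; auto; ofree_auto.

Section FDerivations.
Variables (cut minus : bool).
Notation fd := (fder cut minus).

Lemma fder_by ps L C : frule cut minus ps (L, C) -> (forall p, In p ps -> fd p) ->
  (minus = true -> fmeta_ofree L = true /\ ofree C = true) -> fd (L, C).
Proof.
  intros Hr Hp Ho. apply (fder_rule _ _ ps); auto.
  intro Hm. apply andb_true_iff, (Ho Hm).
Qed.

Lemma fder_by0 L C : frule cut minus [] (L, C) ->
  (minus = true -> fmeta_ofree L = true /\ ofree C = true) -> fd (L, C).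
Proof. intros; eapply fder_by; eauto. intros p []. Qed.

Lemma fder_by1 p L C : frule cut minus [p] (L, C) -> fd p ->
  (minus = true -> fmeta_ofree L = true /\ ofree C = true) -> fd (L, C).
Proof. intros; eapply fder_by; eauto. intros q [<-|[]]; auto. Qed.

Lemma fder_by2 p1 p2 L C : frule cut minus [p1; p2] (L, C) -> fd p1 -> fd p2 ->
  (minus = true -> fmeta_ofree L = true /\ ofree C = true) -> fd (L, C).
Proof. intros; eapply fder_by; eauto. intros q [<-|[<-|[]]]; auto. Qed.

Lemma fder_eq L L' C : fd (L, C) -> L = L' -> fd (L', C).
Proof. intros H ->; exact H. Qed.

Lemma fder_bangs_left c E1 P z E2 C :
  fd (fplug c (E1 ++ P ++ bangs z ++ E2), C) -> fd (fplug c (E1 ++ bangs z ++ P ++ E2), C).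
Proof.
  revert E1; induction z as [|a z IH]; intros E1 H; simpl in *; auto.
  assert (H1 : fd (fplug c (E1 ++ FF (Bang a) :: P ++ bangs z ++ E2), C)).
  { eapply fder_by1; [apply f_bangP2 | exact H | ofree_from H]. }
  specialize (IH (E1 ++ [FF (Bang a)])). rewrite <- !app_assoc in IH. apply IH, H1.
Qed.

Lemma fder_bangs_right c E1 P z E2 C :
  fd (fplug c (E1 ++ bangs z ++ P ++ E2), C) -> fd (fplug c (E1 ++ P ++ bangs z ++ E2), C).
Proof.
  revert E1; induction z as [|a z IH]; intros E1 H; simpl in *; auto.
  specialize (IH (E1 ++ [FF (Bang a)])). rewrite <- !app_assoc in IH. apply IH in H.
  eapply fder_by1; [apply f_bangP1 | exact H | ofree_from H].
Qed.

Lemma fder_bangs_perm c z z' E1 E2 C : Permutation z z' ->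
  fd (fplug c (E1 ++ bangs z ++ E2), C) -> fd (fplug c (E1 ++ bangs z' ++ E2), C).
Proof.
  intro Hp. revert E1. induction Hp; intros E1 H; simpl in *; auto.
  - specialize (IHHp (E1 ++ [FF (Bang x)])). rewrite <- !app_assoc in IHHp. apply IHHp, H.
  - eapply fder_by1; [apply (f_bangP2 _ _ c E1 x [FF (Bang y)]) | exact H | ofree_from H].
Qed.

(* [!C] only contracts from the front of a meta-formula; [!P] brings the copy of [!A] there. *)
Lemma fder_bangC_inner K E A G1 G2 G3 C :
  fd (fplug K (E ++ FF (Bang A) :: G1 ++ FB (FF (Bang A) :: G2) :: G3), C) ->
  (minus = true -> G2 <> []) ->
  fd (fplug K (E ++ FF (Bang A) :: G1 ++ FB [FB G2] :: G3), C).
Proof.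
  intros H Hne.
  assert (H1 : fd (fplug K ([] ++ FF (Bang A) :: E ++ G1 ++ FB (FF (Bang A) :: G2) :: G3), C)).
  { eapply fder_by1; [apply f_bangP2 | exact H | ofree_from H]. }
  assert (H2 : fd (fplug K (FF (Bang A) :: (E ++ G1) ++ FB [FB G2] :: G3), C)).
  { eapply fder_by1; [apply f_bangC; auto | rewrite <- app_assoc; exact H1 | ofree_from H1]. }
  rewrite <- app_assoc in H2.
  eapply fder_by1; [apply (f_bangP1 _ _ K [] A E) | exact H2 | ofree_from H2].
Qed.

End FDerivations.

(** * Cut elimination in F *)

Inductive repl1 (A : formula) (P : fmeta) : fmeta -> fmeta -> Prop :=
| repl1_here L : repl1 A P (FF A :: L) (P ++ L)
| repl1_skip t L L' : repl1 A P L L' -> repl1 A P (t :: L) (t :: L')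
| repl1_in G G' L : repl1 A P G G' -> repl1 A P (FB G :: L) (FB G' :: L).

Section Repl1.
Variables (A : formula) (P : fmeta).
Notation r := (repl1 A P).

Lemma repl1_nil L' : ~ r [] L'.
Proof. intro H; inversion H. Qed.

Lemma repl1_app_l L1 L1' L2 : r L1 L1' -> r (L1 ++ L2) (L1' ++ L2).
Proof. induction 1; simpl; try rewrite <- app_assoc; constructor; auto. Qed.

Lemma repl1_app_r L1 L2 L2' : r L2 L2' -> r (L1 ++ L2) (L1 ++ L2').
Proof. induction L1; simpl; auto. intro; constructor; auto. Qed.

Lemma repl1_plug c Y Y' : r Y Y' -> r (fplug c Y) (fplug c Y').
Proof. induction c; simpl; auto. intro. apply repl1_app_r. constructor 3. auto. Qed.

Lemma repl1_at c E1 E2 : r (fplug c (E1 ++ FF A :: E2)) (fplug c (E1 ++ P ++ E2)).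
Proof. apply repl1_plug, repl1_app_r. constructor. Qed.

Lemma repl1_app_inv L1 L2 L' : r (L1 ++ L2) L' ->
  (exists L1', r L1 L1' /\ L' = L1' ++ L2) \/ (exists L2', r L2 L2' /\ L' = L1 ++ L2').
Proof.
  revert L'; induction L1 as [|t L1 IH]; intros L' H; simpl in *; [right; eauto|].
  inversion H as [L0|t0 L0 L0' H1|G G' L0 H1]; subst.
  - left. exists (P ++ L1). split; [constructor|]. apply app_assoc.
  - destruct (IH _ H1) as [[L1' [? ->]]|[L2' [? ->]]].
    + left. exists (t :: L1'); split; [constructor; auto|reflexivity].
    + right. eauto.
  - left. exists (FB G' :: L1); split; [constructor; auto|reflexivity].
Qed.

Lemma repl1_cons_inv t L L' : r (t :: L) L' ->
  (t = FF A /\ L' = P ++ L) \/ (exists L'', r L L'' /\ L' = t :: L'')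
  \/ (exists G G', t = FB G /\ r G G' /\ L' = FB G' :: L).
Proof. intro H; inversion H; subst; eauto 10. Qed.

Lemma repl1_plug_inv c Y L' : r (fplug c Y) L' ->
  (exists Y', r Y Y' /\ L' = fplug c Y') \/
  (exists c', L' = fplug c' Y /\ forall Z, r (fplug c Z) (fplug c' Z)).
Proof.
  revert L'; induction c as [|G1 c IH G2]; intros L' H; simpl in *; [left; eauto|].
  apply repl1_app_inv in H as [[G1' [H1 ->]]|[L2 [H1 ->]]].
  - right. exists (FIn G1' c G2). split; [reflexivity|]. intro Z. apply repl1_app_l; auto.
  - apply repl1_cons_inv in H1 as [[H2 _]|[[L'' [H2 ->]]|[G [G' [H2 [H3 ->]]]]]];
      [discriminate| |].
    + right. exists (FIn G1 c L''). split; [reflexivity|].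
      intro Z. apply repl1_app_r. constructor; auto.
    + injection H2 as <-. apply IH in H3 as [[Y' [H4 ->]]|[c' [-> H4]]]; [left; eauto|].
      right. exists (FIn G1 c' G2). split; [reflexivity|].
      intro Z. apply repl1_app_r. constructor 3. auto.
Qed.

Lemma repl1_inv L L' : r L L' -> exists K E1 E2,
  L = fplug K (E1 ++ FF A :: E2) /\ L' = fplug K (E1 ++ P ++ E2).
Proof.
  induction 1 as [L|t L L' _ [K [E1 [E2 [-> ->]]]]|G G' L _ [K [E1 [E2 [-> ->]]]]].
  - exists FHole, [], L. split; reflexivity.
  - destruct K as [|G1 K G2].
    + exists FHole, (t :: E1), E2. split; reflexivity.
    + exists (FIn (t :: G1) K G2), E1, E2. split; reflexivity.
  - exists (FIn [] K L), E1, E2. split; reflexivity.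
Qed.

Lemma repl1_ofree L L' :
  r L L' -> fmeta_ofree L = true -> fmeta_ofree P = true -> fmeta_ofree L' = true.
Proof. induction 1; intros; ofree_auto; auto. Qed.

Lemma repl1_nonempty L L' : r L L' -> P <> [] -> L' <> [].
Proof. destruct 1; try discriminate. destruct P; [congruence|discriminate]. Qed.

End Repl1.

Lemma repl1_self A L L' : repl1 A [FF A] L L' -> L' = L.
Proof. induction 1; simpl; congruence. Qed.

(* Replaces some of the occurrences of !B by formulae !A with [Q A]; this is how a cut
   against the conclusion [!A] -> !B of [!R] acts on the copies of !B in the right premise. *)
Inductive bang_repl (B : formula) (Q : formula -> Prop) : fmeta -> fmeta -> Prop :=
| bang_repl_nil : bang_repl B Q [] []
| bang_repl_keep t L L' : bang_repl B Q L L' -> bang_repl B Q (FF t :: L) (FF t :: L')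
| bang_repl_change A L L' :
    Q A -> bang_repl B Q L L' -> bang_repl B Q (FF (Bang B) :: L) (FF (Bang A) :: L')
| bang_repl_in G G' L L' :
    bang_repl B Q G G' -> bang_repl B Q L L' -> bang_repl B Q (FB G :: L) (FB G' :: L').

Section BangRepl.
Variables (B : formula) (Q : formula -> Prop).
Notation r := (bang_repl B Q).

Lemma bang_repl_refl L : r L L.
Proof. induction L using fmeta_nested_ind; constructor; assumption. Qed.

Lemma bang_repl_app L1 L1' L2 L2' : r L1 L1' -> r L2 L2' -> r (L1 ++ L2) (L1' ++ L2').
Proof. induction 1; intros; simpl; try constructor; auto. Qed.

Lemma bang_repl_app_inv L1 L2 L' : r (L1 ++ L2) L' ->
  exists L1' L2', L' = L1' ++ L2' /\ r L1 L1' /\ r L2 L2'.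
Proof.
  revert L'; induction L1 as [|t L1 IH]; intros L' H; simpl in *.
  - exists [], L'. repeat split; auto. constructor.
  - inversion H; subst;
    match goal with H : r (L1 ++ L2) _ |- _ => destruct (IH _ H) as [X [Y [-> [? ?]]]] end;
    [exists (FF t0 :: X) | exists (FF (Bang A) :: X) | exists (FB G' :: X)];
    exists Y; repeat split; auto; constructor; auto.
Qed.

Lemma bang_repl_nil_inv L' : r [] L' -> L' = [].
Proof. intro H; inversion H; auto. Qed.

Lemma bang_repl_FF_inv t L L' : r (FF t :: L) L' -> exists L'', r L L'' /\
  (L' = FF t :: L'' \/ exists A, t = Bang B /\ Q A /\ L' = FF (Bang A) :: L'').
Proof. intro H; inversion H; subst; eauto 10. Qed.

Lemma bang_repl_FB_inv G L L' : r (FB G :: L) L' ->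
  exists G' L'', L' = FB G' :: L'' /\ r G G' /\ r L L''.
Proof. intro H; inversion H; subst; eauto 10. Qed.

Lemma bang_repl_plug_inv c Y L' : r (fplug c Y) L' -> exists c' Y', L' = fplug c' Y' /\ r Y Y' /\
  forall Z Z', r Z Z' -> r (fplug c Z) (fplug c' Z').
Proof.
  revert L'; induction c as [|G1 c IH G2]; intros L' H; simpl in *.
  - exists FHole, L'. repeat split; auto.
  - apply bang_repl_app_inv in H as [G1' [L2 [-> [H1 H2]]]].
    apply bang_repl_FB_inv in H2 as [G' [G2' [-> [H3 H4]]]].
    apply IH in H3 as [c' [Y' [-> [H5 H6]]]].
    exists (FIn G1' c' G2'), Y'. repeat split; auto.
    intros Z Z' HZ. apply bang_repl_app; auto. constructor; auto.
Qed.

Lemma bang_repl_ofree L L' : (forall A, Q A -> ofree A = true) ->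
  r L L' -> fmeta_ofree L = true -> fmeta_ofree L' = true.
Proof. intros HQ; induction 1; intros; ofree_auto; auto. Qed.

Lemma bang_repl_nonempty L L' : r L L' -> L <> [] -> L' <> [].
Proof. intros H; destruct H; congruence. Qed.

Lemma repl1_bang_repl A L L' : repl1 (Bang B) [FF (Bang A)] L L' -> Q A -> r L L'.
Proof.
  induction 1; intro HQ; simpl; try (constructor; auto; apply bang_repl_refl).
  destruct t; constructor; auto. apply bang_repl_refl.
Qed.

End BangRepl.

Fixpoint fsize (A : formula) : nat :=
  match A with
  | Var _ | One => 1
  | Under A B | Over A B | Prod A B | Meet A B | Join A B => S (fsize A + fsize B)
  | Dia A | BoxInv A | Bang A => S (fsize A)
  end.

Fixpoint no_empty_bracket_tm (t : ftm) : bool :=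
  match t with
  | FF _ => true
  | FB G => match G with [] => false | _ => true end && forallb no_empty_bracket_tm G
  end.

Definition no_empty_bracket (L : fmeta) : bool := forallb no_empty_bracket_tm L.

Fixpoint fctx_no_empty_bracket (c : fctx) : bool :=
  match c with
  | FHole => true
  | FIn G1 c G2 => no_empty_bracket G1 && fctx_no_empty_bracket c && no_empty_bracket G2
  end.

Lemma no_empty_bracket_app L1 L2 :
  no_empty_bracket (L1 ++ L2) = no_empty_bracket L1 && no_empty_bracket L2.
Proof. apply forallb_app. Qed.

Lemma no_empty_bracket_cons t L :
  no_empty_bracket (t :: L) = no_empty_bracket_tm t && no_empty_bracket L.
Proof. reflexivity. Qed.

Lemma fplug_nonempty c Y : Y <> [] -> fplug c Y <> [].
Proof. destruct c; simpl; auto. destruct G1; discriminate. Qed.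

Lemma no_empty_bracket_plug c Y : Y <> [] ->
  no_empty_bracket (fplug c Y) = fctx_no_empty_bracket c && no_empty_bracket Y.
Proof.
  intro HY. induction c as [|G1 c IH G2]; simpl; auto.
  rewrite no_empty_bracket_app, no_empty_bracket_cons. simpl.
  fold (no_empty_bracket (fplug c Y)). rewrite IH.
  destruct (fplug c Y) eqn:E; [exfalso; eapply fplug_nonempty; eauto|]. btauto.
Qed.

Ltac premises H :=
  try (pose proof (H _ (or_introl eq_refl)) as ?P1; simpl in P1);
  try (pose proof (H _ (or_intror (or_introl eq_refl))) as ?P2; simpl in P2).

Ltac nonnil := let E := fresh in
  intro E; repeat (let E1 := fresh in apply app_eq_nil in E; destruct E as [E1 E]); discriminate.

(* Keeps the side conditions of [/R], [\R] and [!C] true after a cut formula is replaced by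
   the antecedent of the left premise; empty brackets must be excluded because of [[]^-1 R]. *)
Lemma fder_minus_antecedent minus s : fder false minus s -> minus = true ->
  fst s <> [] /\ no_empty_bracket (fst s) = true.
Proof.
  intro H. induction H as [ps s Hr Hps IH _]. intro Hm.
  destruct Hr; try discriminate; premises IH; clear IH Hps; simpl in *;
  repeat match goal with H : _ -> _ /\ _ |- _ => specialize (H Hm); destruct H end.
  all: try congruence.
  all: repeat match goal with H : context [no_empty_bracket (fplug _ _)] |- _ =>
                rewrite no_empty_bracket_plug in H; [|nonnil] end.
  all: split; [try (apply fplug_nonempty; nonnil); try nonnil; try assumption|].
  all: try (rewrite no_empty_bracket_plug; [|nonnil]).
  all: repeat (rewrite ?no_empty_bracket_app, ?no_empty_bracket_cons in *;
               simpl no_empty_bracket_tm in *); andb_split; auto.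
  all: try (let E := fresh in intro E; apply app_eq_nil in E; destruct E; congruence).
  all: try match goal with |- ?l <> [] => destruct l; discriminate end.
  all: match goal with |- match ?l with _ => _ end = true =>
         destruct l; [exfalso; intuition | reflexivity] end.
Qed.

Ltac repl1_inv := repeat match goal with
 | H : repl1 _ _ (fplug _ _) _ |- _ =>
     apply repl1_plug_inv in H as [[?Y [?Hr ->]]|[?c' [-> ?Hm]]]
 | H : repl1 _ _ (FF _ :: _) _ |- _ =>
     let Heq := fresh "Heq" in
     apply repl1_cons_inv in H as [[Heq ->]|[[?L [?Hr ->]]|[?G [?G' [Heq [?Hr ->]]]]]];
     [injection Heq as Heq; try subst | | discriminate Heq]
 | H : repl1 _ _ (FB _ :: _) _ |- _ =>
     let Heq := fresh "Heq" in
     apply repl1_cons_inv in H as [[Heq ->]|[[?L [?Hr ->]]|[?G [?G' [Heq [?Hr ->]]]]]];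
     [discriminate Heq | | injection Heq as Heq; subst]
 | H : repl1 _ _ [] _ |- _ => apply repl1_nil in H; contradiction
 | H : repl1 _ _ (?l ++ _) _ |- _ => is_var l;
     apply repl1_app_inv in H as [[?L [?Hr ->]]|[?L [?Hr ->]]]
 end.

Ltac repl1_solve := first [ assumption
 | apply repl1_skip; repl1_solve | apply repl1_in; repl1_solve
 | apply repl1_app_l; repl1_solve | apply repl1_app_r; repl1_solve
 | match goal with Hm : forall Z, repl1 _ _ (fplug ?c Z) (fplug ?c' Z)
     |- repl1 _ _ (fplug ?c _) (fplug ?c' _) => apply Hm end
 | apply repl1_plug; repl1_solve ].

Ltac bang_repl_inv := repeat match goal with
 | H : bang_repl _ _ (fplug _ _) _ |- _ =>
     apply bang_repl_plug_inv in H as [?c' [?Y [-> [?Hr ?Hm]]]]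
 | H : bang_repl _ _ (FF _ :: _) _ |- _ =>
     let Heq := fresh "Heq" in
     apply bang_repl_FF_inv in H as [?L [?Hr [-> | [?B [Heq [?HQ ->]]]]]];
     [| try discriminate Heq; try (injection Heq as Heq; subst)]
 | H : bang_repl _ _ (FB _ :: _) _ |- _ =>
     apply bang_repl_FB_inv in H as [?G' [?L [-> [?Hr ?Hr]]]]
 | H : bang_repl _ _ [] _ |- _ => apply bang_repl_nil_inv in H; subst
 | H : bang_repl _ _ (?l ++ _) _ |- _ => is_var l;
     apply bang_repl_app_inv in H as [?L [?L [-> [?Hr ?Hr]]]]
 end.

Ltac bang_repl_solve := repeat first [ assumption
 | apply bang_repl_app | apply bang_repl_keep | apply bang_repl_in | apply bang_repl_nil
 | (apply bang_repl_change; [assumption|])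
 | match goal with Hm : forall Z Z', bang_repl _ _ Z Z' -> bang_repl _ _ (fplug ?c Z) (fplug ?c' Z')
     |- bang_repl _ _ (fplug ?c _) (fplug ?c' _) => apply Hm end ].

(* Re-apply the last rule of a derivation after a replacement that does not touch its
   principal formula; the premises come from the induction hypothesis [IH]. *)
Ltac reapply_rule solve_repl nonempty :=
  let premise := first [
      match goal with IH : forall L', _ _ _ _ L' -> fder _ _ _ |- _ =>
        apply IH; solve [solve_repl] end
    | match goal with H : fder _ _ _ |- _ => exact H end ] in
  let nonempty_side := try (let Hm := fresh in intro Hm; nonempty) in
  first [ eapply fder_by0; [econstructor; eauto; nonempty_side | auto]
        | eapply fder_by1; [econstructor; eauto; nonempty_side | premise | auto]
        | eapply fder_by2; [econstructor; eauto; nonempty_side | premise | premise | auto] ].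

Section CutElimination.
Variable minus : bool.
Notation fd := (fder false minus).

Definition cut_admissible (A : formula) := forall P L C L',
  fd (P, A) -> fd (L, C) -> repl1 A P L L' -> fd (L', C).

Lemma cut_admissible_at A P c E1 E2 C : cut_admissible A -> fd (P, A) ->
  fd (fplug c (E1 ++ FF A :: E2), C) -> fd (fplug c (E1 ++ P ++ E2), C).
Proof. intros H H1 H2. eapply H; eauto. apply repl1_at. Qed.

Section BangCut.
Variable B : formula.
Hypothesis cut_B : cut_admissible B.

Lemma fder_bang_repl s : fd s ->
  forall L', bang_repl B (fun A => fd ([FF (Bang A)], B)) (fst s) L' -> fd (L', snd s).
Proof.
  induction 1 as [ps s Hr Hps IH Hof]. intros L' HL.
  assert (Hof' : minus = true -> fmeta_ofree L' = true /\ ofree (snd s) = true).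
  { intro Hm. specialize (Hof Hm). destruct s as [L C]. apply andb_true_iff in Hof as [HL0 HC].
    split; auto. eapply bang_repl_ofree; [|exact HL|exact HL0].
    intros A HA. apply fder_ofree in HA as [HA _]; auto. ofree_auto. }
  clear Hof. destruct Hr; premises IH; clear IH Hps; simpl in *; bang_repl_inv.
  all: try reapply_rule bang_repl_solve ltac:(eapply bang_repl_nonempty; [eassumption|]; auto).
  (* the replaced [!B] is the one derelicted by [!L]: cut on the smaller [B] *)
  apply (cut_B [FF (Bang B0)] (fplug c' (L ++ FF B :: L1))); [exact HQ | | apply repl1_at].
  apply P1; bang_repl_solve.
Qed.

End BangCut.

(* What the right rule introducing the main connective of A needs to conclude P -> A. *)
Definition principal (A : formula) (P : fmeta) : Prop :=
  match A with
  | Over C B => fd (P ++ [FF B], C)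
  | Under A1 C => fd (FF A1 :: P, C)
  | Prod A1 B1 => exists P1 P2, P = P1 ++ P2 /\ fd (P1, A1) /\ fd (P2, B1)
  | Meet A1 A2 => fd (P, A1) /\ fd (P, A2)
  | Join A1 A2 => fd (P, A1) \/ fd (P, A2)
  | Dia A1 => exists X, P = [FB X] /\ fd (X, A1)
  | BoxInv A1 => fd ([FB P], A1)
  | One => P = []
  | Var _ | Bang _ => False
  end.

Section PrincipalCut.
Variables (A : formula) (P : fmeta).
Hypothesis cut_smaller : forall A', fsize A' < fsize A -> cut_admissible A'.
Hypotheses (HP : fd (P, A)) (HPA : principal A P).

Ltac smaller := apply cut_smaller; simpl; lia.

Lemma cut_principal s : fd s -> forall L', repl1 A P (fst s) L' -> fd (L', snd s).
Proof.
  assert (HPne : minus = true -> P <> []) by (intro Hm; apply (fder_minus_antecedent _ _ HP Hm)).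
  induction 1 as [ps s Hr Hps IH Hof]. intros L' HL.
  assert (Hof' : minus = true -> fmeta_ofree L' = true /\ ofree (snd s) = true).
  { intro Hm. specialize (Hof Hm). destruct s as [L C]. apply andb_true_iff in Hof as [HL0 HC].
    split; auto. eapply repl1_ofree; [exact HL|exact HL0|]. apply (fder_ofree _ _ _ _ HP Hm). }
  clear Hof. destruct Hr; premises IH; premises Hps; clear IH Hps; simpl in *; repl1_inv.
  all: try reapply_rule repl1_solve ltac:(eapply repl1_nonempty; [eassumption|]; auto).
  all: simpl principal in HPA; try contradiction.
  - rewrite app_nil_r. exact HP.
  - assert (HPG : fd (P ++ G, C)).
    { rewrite <- (app_nil_r G).
      apply (cut_admissible_at B G FHole P []); [smaller | assumption | exact HPA]. }
    rewrite (app_assoc P G D2).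
    apply (cut_admissible_at C (P ++ G)); [smaller | exact HPG | assumption].
  - assert (HGP : fd (G ++ P, C)).
    { apply (cut_admissible_at A0 G FHole [] P); [smaller | assumption | exact HPA]. }
    rewrite (app_assoc G P D2).
    apply (cut_admissible_at C (G ++ P)); [smaller | exact HGP | assumption].
  - destruct HPA as [Q1 [Q2 [-> [HQ1 HQ2]]]].
    assert (H1 : fd (fplug c ((D1 ++ Q1) ++ FF B :: D2), D)).
    { rewrite <- app_assoc. apply (cut_admissible_at A0 Q1); [smaller | exact HQ1 | assumption]. }
    replace (D1 ++ (Q1 ++ Q2) ++ D2) with ((D1 ++ Q1) ++ Q2 ++ D2) by now rewrite <- !app_assoc.
    apply (cut_admissible_at B Q2); [smaller | exact HQ2 | exact H1].
  - subst P. assumption.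
  - destruct HPA as [H|H]; [apply (cut_admissible_at A1 P) | apply (cut_admissible_at A2 P)];
      solve [smaller | exact H | assumption].
  - apply (cut_admissible_at A1 P); [smaller | apply HPA | assumption].
  - apply (cut_admissible_at A2 P); [smaller | apply HPA | assumption].
  - rewrite app_nil_r. apply (cut_admissible_at A0 [FB P]); [smaller | exact HPA | assumption].
  - destruct HPA as [X [-> HX]].
    replace (D1 ++ [FB X] ++ D2) with (fplug (FIn D1 FHole D2) ([] ++ X ++ []))
      by (simpl; now rewrite app_nil_r).
    rewrite <- fplug_comp.
    apply (cut_admissible_at A0 X); [smaller | exact HX | rewrite fplug_comp; assumption].
Qed.

End PrincipalCut.

Definition closed_left_rule (Xps : list fmeta) (Xc : fmeta) := forall K E1 E2 C,
  (forall Xp, In Xp Xps -> fd (fplug K (E1 ++ Xp ++ E2), C)) ->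
  (minus = true -> fmeta_ofree (fplug K (E1 ++ Xc ++ E2)) = true /\ ofree C = true) ->
  fd (fplug K (E1 ++ Xc ++ E2), C).

Lemma cut_commute A c D1 D2 Xps Xc : closed_left_rule Xps Xc ->
  (forall Xp, In Xp Xps -> forall L C L',
     fd (L, C) -> repl1 A (fplug c (D1 ++ Xp ++ D2)) L L' -> fd (L', C)) ->
  (minus = true -> fmeta_ofree (fplug c (D1 ++ Xc ++ D2)) = true) ->
  forall L C L', fd (L, C) -> repl1 A (fplug c (D1 ++ Xc ++ D2)) L L' -> fd (L', C).
Proof.
  intros Hcl IH HPof L C L' HL Hr.
  destruct (repl1_inv _ _ _ _ Hr) as [K [E1 [E2 [-> ->]]]].
  destruct (fplug_flatten K E1 E2 c) as [K' [E1' [E2' Hflat]]].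
  assert (Hassoc : forall X, fplug K (E1 ++ fplug c (D1 ++ X ++ D2) ++ E2)
                             = fplug K' ((E1' ++ D1) ++ X ++ D2 ++ E2')).
  { intro X. rewrite Hflat, <- !app_assoc. reflexivity. }
  rewrite Hassoc. apply Hcl.
  - intros Xp HXp. rewrite <- Hassoc. eapply IH; [exact HXp | exact HL | apply repl1_at].
  - rewrite <- Hassoc. intro Hm. destruct (fder_ofree _ _ _ _ HL Hm) as [HL0 HC].
    split; [|exact HC]. eapply repl1_ofree; [apply repl1_at | exact HL0 | exact (HPof Hm)].
Qed.

Ltac closed_by rule :=
  let K := fresh "K" in let E1 := fresh "E1" in let E2 := fresh "E2" in
  let Hp := fresh "Hp" in let Ho := fresh "Ho" in
  intros K E1 E2 ? Hp Ho; premises Hp; clear Hp;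
  simpl in *; rewrite <- ?app_assoc in *; simpl in *;
  first [ eapply fder_by1; [apply rule; try assumption | eassumption | exact Ho]
        | eapply fder_by2; [apply rule | eassumption | eassumption | exact Ho]
        | apply rule; assumption ].

Ltac left_rule c D1 D2 Xps Xc rule :=
  right; right; right; exists c, D1, D2, Xps, Xc; split; [| split];
  [ simpl; rewrite <- ?app_assoc; reflexivity
  | closed_by rule
  | let Xp := fresh in let HXp := fresh in
    intros Xp HXp; repeat destruct HXp as [<-|HXp]; try contradiction;
    simpl; rewrite <- ?app_assoc; simpl; auto ].

Lemma left_premise_cases ps P A : frule false minus ps (P, A) -> (forall p, In p ps -> fd p) ->
  P = [FF A] \/ principal A P \/
  (exists B A', A = Bang B /\ P = [FF (Bang A')] /\ fd ([FF (Bang A')], B)) \/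
  exists c D1 D2 Xps Xc, P = fplug c (D1 ++ Xc ++ D2) /\ closed_left_rule Xps Xc /\
    forall Xp, In Xp Xps -> In (fplug c (D1 ++ Xp ++ D2), A) ps.
Proof.
  intros Hr Hps. remember (P, A) as s eqn:Es. revert P A Es.
  destruct Hr as [A|e|c G B D1 C D2 D|G B C e|c G A D1 C D2 D|G A C e|c D1 A B D2 D|D A G B
    |c D1 D2 A e|c D1 A1 A2 D2 C|X A1 A2|X A1 A2|c D1 A1 A2 D2 C|c D1 A1 A2 D2 C|X A1 A2
    |c D1 A D2 B|X A|c D1 A D2 B|X A|c D1 A D2 C|c D1 A P D2 C|c D1 A P D2 C|A B
    |c A G1 G2 G3 C e|];
  intros ? ? Es; injection Es as <- <-; premises Hps.
  all: try solve [left; reflexivity | right; left; simpl; eauto 6 | right; right; left; eauto].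
  - left_rule c D1 D2 [[FF C]] (FF (Over C B) :: G) f_overL.
  - left_rule c D1 D2 [[FF C]] (G ++ [FF (Under A C)]) f_underL.
  - left_rule c D1 D2 [[FF A; FF B]] [FF (Prod A B)] f_prodL.
  - left_rule c D1 D2 [@nil ftm] [FF One] f_oneL.
  - left_rule c D1 D2 [[FF A1]; [FF A2]] [FF (Join A1 A2)] f_joinL.
  - left_rule c D1 D2 [[FF A1]] [FF (Meet A1 A2)] f_meetL1.
  - left_rule c D1 D2 [[FF A2]] [FF (Meet A1 A2)] f_meetL2.
  - left_rule c D1 D2 [[FF A]] [FB [FF (BoxInv A)]] f_boxinvL.
  - left_rule c D1 D2 [[FB [FF A]]] [FF (Dia A)] f_diaL.
  - left_rule c D1 D2 [[FF A]] [FF (Bang A)] f_bangL.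
  - left_rule c D1 D2 [FF (Bang A) :: P] (P ++ [FF (Bang A)]) f_bangP1.
  - left_rule c D1 D2 [P ++ [FF (Bang A)]] (FF (Bang A) :: P) f_bangP2.
  - left_rule c (@nil ftm) G3 [FF (Bang A) :: G1 ++ [FB (FF (Bang A) :: G2)]]
      (FF (Bang A) :: G1 ++ [FB [FB G2]]) fder_bangC_inner.
  - discriminate.
Qed.

Lemma cut_admissible_step A :
  (forall A', fsize A' < fsize A -> cut_admissible A') -> cut_admissible A.
Proof.
  intros IHA P L C L' HP. remember (P, A) as s eqn:Es. revert P Es L C L'.
  induction HP as [ps s Hr Hps IH Hof]; intros P Es L C L' HL Hrepl; subst s.
  assert (HP : fd (P, A)) by (econstructor; eauto).
  destruct (left_premise_cases _ _ _ Hr Hps)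
    as [->|[HPA|[[B [A' [-> [-> HB]]]]|[c [D1 [D2 [Xps [Xc [-> [Hcl Hin]]]]]]]]]].
  - rewrite (repl1_self _ _ _ Hrepl). exact HL.
  - exact (cut_principal A P IHA HP HPA (L, C) HL L' Hrepl).
  - apply (fder_bang_repl B (IHA B ltac:(simpl; lia)) (L, C) HL L').
    eapply repl1_bang_repl; [exact Hrepl | exact HB].
  - refine (cut_commute A c D1 D2 Xps Xc Hcl _ _ L C L' HL Hrepl).
    + intros Xp HXp. exact (IH _ (Hin _ HXp) _ eq_refl).
    + intro Hm. apply (fder_ofree _ _ _ _ HP Hm).
Qed.

End CutElimination.

Lemma cut_admissible_all minus A : cut_admissible minus A.
Proof.
  induction A as [A IH] using (induction_ltof1 _ fsize).
  exact (cut_admissible_step minus A IH).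
Qed.

Lemma frule_cut_cases cut minus ps s : frule cut minus ps s ->
  frule false minus ps s \/ exists P A c G1 G2 C,
    ps = [(P, A); (fplug c (G1 ++ FF A :: G2), C)] /\ s = (fplug c (G1 ++ P ++ G2), C).
Proof. destruct 1; try (left; constructor; assumption); right; eauto 10. Qed.

Theorem fder_cut_elim minus s : fder true minus s -> fder false minus s.
Proof.
  induction 1 as [ps s Hr Hps IH Hof].
  destruct (frule_cut_cases _ _ _ _ Hr) as [Hr'|[P [A [c [G1 [G2 [C [-> ->]]]]]]]].
  - econstructor; eauto.
  - apply (cut_admissible_at minus A P); [apply cut_admissible_all | apply IH; simpl; auto..].
Qed.

Lemma fder_add_cut minus s : fder false minus s -> fder true minus s.
Proof.
  induction 1 as [ps s Hr Hps IH Hof]. econstructor; eauto.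
  destruct Hr; try (constructor; assumption). discriminate.
Qed.

(** * From M' to F *)

Fixpoint unstoup_tm (t : tm) : ftm :=
  match t with
  | TF A => FF A
  | TB z G => FB (bangs z ++ map unstoup_tm G)
  end.

Definition unstoup (T : meta) : fmeta := bangs (fst T) ++ map unstoup_tm (snd T).

Fixpoint unstoup_ctx (c : ctx) : fctx :=
  match c with
  | Hole => FHole
  | In_ z G1 c G2 => FIn (bangs z ++ map unstoup_tm G1) (unstoup_ctx c) (map unstoup_tm G2)
  end.

Lemma unstoup_plug c T : unstoup (plug c T) = fplug (unstoup_ctx c) (unstoup T).
Proof.
  induction c as [|z G1 c IH G2]; simpl; auto.
  destruct (plug c T) as [z' G'] eqn:E. unfold unstoup in *; simpl in *.
  rewrite map_app, <- app_assoc, <- IH. reflexivity.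
Qed.

Fixpoint unstoup_tm_ofree (t : tm) : ftm_ofree (unstoup_tm t) = tm_ofree t.
Proof.
  destruct t as [A|z G]; simpl; auto.
  fold (fmeta_ofree (bangs z ++ map unstoup_tm G)).
  rewrite fmeta_ofree_app, fmeta_ofree_bangs. f_equal.
  unfold fmeta_ofree. induction G as [|t G IHG]; simpl; auto.
  rewrite unstoup_tm_ofree, IHG. reflexivity.
Qed.

Lemma fmeta_ofree_map_unstoup G : fmeta_ofree (map unstoup_tm G) = forallb tm_ofree G.
Proof.
  unfold fmeta_ofree. induction G as [|t G IHG]; simpl; auto.
  rewrite unstoup_tm_ofree, IHG. reflexivity.
Qed.

Lemma fmeta_ofree_unstoup T C :
  fmeta_ofree (unstoup T) && ofree C = mseq_ofree (T, C).
Proof.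
  unfold unstoup, mseq_ofree.
  rewrite fmeta_ofree_app, fmeta_ofree_bangs, fmeta_ofree_map_unstoup. reflexivity.
Qed.

Lemma unstoup_nonempty z G : G <> [] \/ z <> [] -> unstoup (z, G) <> [].
Proof.
  intros [H|H] E; apply app_eq_nil in E as [E1 E2];
    [destruct G|destruct z]; try discriminate; congruence.
Qed.

Lemma unstoup_emb (X : fmeta) : unstoup ([], map emb X) = X.
Proof.
  unfold unstoup; simpl.
  induction X using fmeta_nested_ind; simpl; congruence.
Qed.

Section MToF.
Variables (cut minus : bool).
Notation fd := (fder cut minus).
Local Notation us := (map unstoup_tm).

Ltac unstoup_simpl := simpl fst in *; simpl snd in *; rewrite ?unstoup_plug in *;
  unfold unstoup in *; simpl fst in *; simpl snd in *;
  repeat (simpl in *; rewrite ?map_app, ?bangs_app, <- ?app_assoc in *); simpl in *.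
Ltac reassoc := simpl; rewrite <- ?app_assoc; simpl; rewrite <- ?app_assoc; reflexivity.
Ltac from H := eapply fder_eq; [exact H | reassoc].
Ltac ofree_concl := match goal with Hof : minus = true -> _ /\ _ |- _ =>
  let Hm := fresh in intro Hm; destruct (Hof Hm); split; auto; ofree_auto end.
Ltac nonempty_side := match goal with H : minus = true -> _ \/ _ |- _ =>
  let Hm := fresh in intro Hm; apply unstoup_nonempty; auto end.

(* Nesting to the left exposes the hole of a left rule: the result has the shape
   [fplug K (E1 ++ FF A :: E2)] of the conclusions of [frule]. *)
Ltac unstoup_simpl_left := simpl fst in *; simpl snd in *; rewrite ?unstoup_plug in *;
  unfold unstoup in *; simpl fst in *; simpl snd in *;
  repeat (simpl in *; rewrite ?map_app, ?bangs_app, ?app_assoc in *); simpl in *.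

Ltac ofree_premises := let Hm := fresh in intro Hm;
  repeat match goal with H : fder _ _ (_, _) |- _ =>
    destruct (fder_ofree _ _ _ _ H Hm); revert H end;
  intros; split; ofree_auto.

Lemma fder_unstoup_overL c z1 G B z2 D1 C D2 D :
  fd (unstoup (z1, G), B) -> fd (unstoup (plug c (z2, D1 ++ TF C :: D2)), D) ->
  fd (unstoup (plug c (z1 ++ z2, D1 ++ TF (Over C B) :: G ++ D2)), D).
Proof.
  intros H1 H2. unstoup_simpl.
  eapply fder_eq; [eapply (fder_bangs_left _ _ _ [] (bangs z2 ++ us D1 ++ [FF (Over C B)]) z1
                                         (us G ++ us D2)) | reassoc].
  eapply fder_eq;
    [eapply fder_by2; [eapply (f_overL _ _ _ (bangs z1 ++ us G) B (bangs z2 ++ us D1))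
                      | from H1 | from H2 | ] | reassoc].
  ofree_premises.
Qed.

Lemma fder_unstoup_underL c z1 G A z2 D1 C D2 D :
  fd (unstoup (z1, G), A) -> fd (unstoup (plug c (z2, D1 ++ TF C :: D2)), D) ->
  fd (unstoup (plug c (z1 ++ z2, D1 ++ G ++ TF (Under A C) :: D2)), D).
Proof.
  intros H1 H2. unstoup_simpl.
  eapply fder_eq; [eapply (fder_bangs_left _ _ _ [] (bangs z2 ++ us D1) z1
                                          (us G ++ FF (Under A C) :: us D2)) | reassoc].
  eapply fder_eq;
    [eapply fder_by2; [eapply (f_underL _ _ _ (bangs z1 ++ us G) A (bangs z2 ++ us D1))
                      | from H1 | from H2 | ] | reassoc].
  ofree_premises.
Qed.

Lemma fder_unstoup_underR z G A C : (minus = true -> G <> [] \/ z <> []) ->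
  fd (unstoup (z, TF A :: G), C) -> fd (unstoup (z, G), Under A C).
Proof.
  intros Hne H. unstoup_simpl.
  eapply fder_by1; [apply f_underR; nonempty_side | | ofree_premises].
  eapply fder_eq; [apply (fder_bangs_right _ _ FHole [] [FF A] z (us G) C); from H | reassoc].
Qed.

Lemma fder_unstoup_prodR z1 D A z2 G B :
  fd (unstoup (z1, D), A) -> fd (unstoup (z2, G), B) ->
  fd (unstoup (z1 ++ z2, D ++ G), Prod A B).
Proof.
  intros H1 H2. unstoup_simpl.
  eapply fder_eq; [apply (fder_bangs_left _ _ FHole (bangs z1) (us D) z2 (us G)) | reassoc].
  eapply fder_eq; [eapply fder_by2; [apply f_prodR | from H1 | from H2 | ofree_premises] | reassoc].
Qed.

Lemma fder_unstoup_bangL c z A G1 G2 B :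
  fd (unstoup (plug c (z ++ [A], G1 ++ G2)), B) ->
  fd (unstoup (plug c (z, G1 ++ TF (Bang A) :: G2)), B).
Proof.
  intro H. unstoup_simpl.
  eapply fder_by1; [eapply (f_bangP1 _ _ _ (bangs z)) | from H | ofree_premises].
Qed.

Lemma fder_unstoup_bangP c z A G1 G2 B :
  fd (unstoup (plug c (z, G1 ++ TF A :: G2)), B) ->
  fd (unstoup (plug c (z ++ [A], G1 ++ G2)), B).
Proof.
  intro H. unstoup_simpl.
  assert (H1 : fd (fplug (unstoup_ctx c) ((bangs z ++ us G1) ++ FF (Bang A) :: us G2), B)).
  { eapply fder_by1; [apply f_bangL | from H | ofree_premises]. }
  eapply fder_by1; [eapply (f_bangP2 _ _ _ (bangs z)) | from H1 | ofree_premises].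
Qed.

Lemma fder_unstoup_bangC c z A G1 z' G2 G3 B : (minus = true -> G2 <> [] \/ z' <> []) ->
  fd (unstoup (plug c (z ++ [A], G1 ++ TB (z' ++ [A]) G2 :: G3)), B) ->
  fd (unstoup (plug c (z ++ [A], G1 ++ TB [] [TB z' G2] :: G3)), B).
Proof.
  intros Hne H. unstoup_simpl.
  set (K := fctx_comp (unstoup_ctx c) (FIn (bangs z ++ FF (Bang A) :: us G1) FHole (us G3))).
  assert (H0 : fd (fplug K ([] ++ bangs z' ++ bangs [A] ++ us G2), B)).
  { eapply fder_eq; [exact H|]. unfold K. rewrite fplug_comp. reassoc. }
  apply (fder_bangs_left _ _ K [] (bangs z') [A] (us G2) B) in H0.
  unfold K in H0. rewrite fplug_comp in H0. simpl in H0. rewrite <- app_assoc in H0.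
  apply (fder_bangC_inner _ _ _ (bangs z) A (us G1) (bangs z' ++ us G2) (us G3) B) in H0;
    [from H0 | nonempty_side].
Qed.

Lemma fder_unstoup_cut x P A c z G1 G2 C : cut = true ->
  fd (unstoup (x, P), A) -> fd (unstoup (plug c (z, G1 ++ TF A :: G2)), C) ->
  fd (unstoup (plug c (x ++ z, G1 ++ P ++ G2)), C).
Proof.
  intros Hcut H1 H2. unstoup_simpl.
  eapply fder_eq; [eapply (fder_bangs_left _ _ _ [] (bangs z ++ us G1) x (us P ++ us G2)) | reassoc].
  eapply fder_eq; [eapply fder_by2; [eapply (f_cut _ _ (bangs x ++ us P) A _ (bangs z ++ us G1));
                                     exact Hcut | from H1 | from H2 | ofree_premises] | reassoc].
Qed.

Lemma fder_unstoup_perm c z z' G C : Permutation z z' ->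
  fd (unstoup (plug c (z, G)), C) -> fd (unstoup (plug c (z', G)), C).
Proof.
  intros Hp H. unstoup_simpl.
  eapply fder_eq; [eapply (fder_bangs_perm _ _ _ z z' [] (us G)); [exact Hp | from H] | reassoc].
Qed.

Lemma mder_to_fder s : mder cut minus s -> fd (unstoup (fst s), snd s).
Proof.
  induction 1 as [ps s Hr Hps IH Hof].
  assert (Hof' : minus = true -> fmeta_ofree (unstoup (fst s)) = true /\ ofree (snd s) = true).
  { intro Hm. specialize (Hof Hm). destruct s as [T C].
    rewrite <- fmeta_ofree_unstoup in Hof. andb_split. auto. }
  clear Hof. destruct Hr; premises IH; clear IH Hps.
  all: try solve [ apply fder_unstoup_overL; assumption | apply fder_unstoup_underL; assumption
                 | apply fder_unstoup_underR; assumption | apply fder_unstoup_prodR; assumption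
                 | apply fder_unstoup_bangL; assumption | apply fder_unstoup_bangP; assumption
                 | apply fder_unstoup_bangC; assumption | eapply fder_unstoup_cut; eassumption
                 | eapply fder_unstoup_perm; eassumption ].
  all: unstoup_simpl_left.
  all: first [ eapply fder_by0; [econstructor; eauto | ofree_concl]
             | eapply fder_by1; [econstructor; eauto; nonempty_side | eassumption | ofree_concl]
             | eapply fder_by2; [econstructor; eauto | eassumption | eassumption | ofree_concl] ].
Qed.

End MToF.

(** * From F to M' *)

Definition meta_ofree (T : meta) : bool := forallb ofree (fst T) && forallb tm_ofree (snd T).

Fixpoint ctx_ofree (c : ctx) : bool :=
  match c with
  | Hole => true
  | In_ z G1 c G2 =>
      forallb ofree z && forallb tm_ofree G1 && ctx_ofree c && forallb tm_ofree G2
  end.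

Lemma meta_ofree_pair z G : meta_ofree (z, G) = forallb ofree z && forallb tm_ofree G.
Proof. reflexivity. Qed.

Lemma meta_ofree_plug c T : meta_ofree (plug c T) = ctx_ofree c && meta_ofree T.
Proof.
  induction c as [|z G1 c IH G2]; simpl; auto.
  destruct (plug c T) as [z' G'] eqn:E. unfold meta_ofree in *; simpl in *.
  rewrite forallb_app. simpl. rewrite IH. btauto.
Qed.

Lemma forallb_Permutation {T} (f : T -> bool) l l' :
  Permutation l l' -> forallb f l = forallb f l'.
Proof. induction 1; simpl; try congruence. btauto. Qed.

Ltac meta_ofree_auto :=
  repeat (rewrite ?meta_ofree_plug, ?meta_ofree_pair, ?forallb_app in *;
          simpl forallb in *; simpl tm_ofree in *; simpl ofree in *);
  andb_split; try assumption; try reflexivity.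

Fixpoint ctx_comp (c d : ctx) : ctx :=
  match c with Hole => d | In_ z G1 c' G2 => In_ z G1 (ctx_comp c' d) G2 end.

Lemma plug_comp c d T : plug (ctx_comp c d) T = plug c (plug d T).
Proof. induction c; simpl; auto. rewrite IHc. reflexivity. Qed.

(* [stoupify L z G]: z;G arises from L by moving some !-formulae, at every bracket level,
   into the stoup of that level (as the formula without its !). *)
Inductive stoupify : fmeta -> stoup -> list tm -> Prop :=
| stoupify_nil : stoupify [] [] []
| stoupify_keep A L z G : stoupify L z G -> stoupify (FF A :: L) z (TF A :: G)
| stoupify_stoup A L z G : stoupify L z G -> stoupify (FF (Bang A) :: L) (A :: z) G
| stoupify_in G0 z0 G0' L z G :
    stoupify G0 z0 G0' -> stoupify L z G -> stoupify (FB G0 :: L) z (TB z0 G0' :: G).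

Definition stoupify_meta (L : fmeta) (T : meta) := stoupify L (fst T) (snd T).

Lemma stoupify_app L1 L2 z1 z2 G1 G2 :
  stoupify L1 z1 G1 -> stoupify L2 z2 G2 -> stoupify (L1 ++ L2) (z1 ++ z2) (G1 ++ G2).
Proof. induction 1; intros; simpl; try constructor; auto. Qed.

Lemma stoupify_app_nil L1 L2 z G1 G2 :
  stoupify L1 z G1 -> stoupify L2 [] G2 -> stoupify (L1 ++ L2) z (G1 ++ G2).
Proof. intros H1 H2. rewrite <- (app_nil_r z). apply stoupify_app; auto. Qed.

Lemma stoupify_app_inv L1 L2 z G : stoupify (L1 ++ L2) z G -> exists z1 z2 G1 G2,
  z = z1 ++ z2 /\ G = G1 ++ G2 /\ stoupify L1 z1 G1 /\ stoupify L2 z2 G2.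
Proof.
  revert z G; induction L1 as [|t L1 IH]; intros z G H; simpl in *.
  - exists [], z, [], G. repeat split; auto. constructor.
  - inversion H as [|A L z' G' H1|A L z' G' H1|G0 z0 G0' L z' G' H0 H1]; subst;
      destruct (IH _ _ H1) as [y1 [y2 [K1 [K2 [-> [-> [? ?]]]]]]];
      [exists y1, y2, (TF A :: K1), K2 | exists (A :: y1), y2, K1, K2
      | exists y1, y2, (TB z0 G0' :: K1), K2];
      repeat split; auto; constructor; auto.
Qed.

Lemma stoupify_nil_inv z G : stoupify [] z G -> z = [] /\ G = [].
Proof. intro H; inversion H; auto. Qed.

Lemma stoupify_FF_inv A L z G : stoupify (FF A :: L) z G -> exists z' G', stoupify L z' G' /\
  ((z = z' /\ G = TF A :: G') \/ (exists A0, A = Bang A0 /\ z = A0 :: z' /\ G = G')).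
Proof. intro H; inversion H; subst; eauto 10. Qed.

Lemma stoupify_FB_inv G0 L z G : stoupify (FB G0 :: L) z G -> exists z0 G0' G',
  stoupify G0 z0 G0' /\ stoupify L z G' /\ G = TB z0 G0' :: G'.
Proof. intro H; inversion H; subst; eauto 10. Qed.

Lemma stoupify_plug_inv c X z G : stoupify (fplug c X) z G -> exists c' zx X',
  plug c' (zx, X') = (z, G) /\ stoupify X zx X' /\
  forall Y zy Y', stoupify Y zy Y' -> stoupify_meta (fplug c Y) (plug c' (zy, Y')).
Proof.
  revert z G; induction c as [|G1 c IH G2]; intros z G H; simpl in *.
  - exists Hole, z, G. repeat split; auto.
  - apply stoupify_app_inv in H as [z1 [z2 [H1 [H2 [-> [-> [Ha Hb]]]]]]].
    apply stoupify_FB_inv in Hb as [z0 [G0' [G' [Hc [Hd ->]]]]].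
    apply IH in Hc as [c' [zx [X' [He [Hf Hh]]]]].
    exists (In_ (z1 ++ z2) H1 c' G'), zx, X'. simpl. rewrite He. repeat split; auto.
    intros Y zy Y' HY. specialize (Hh _ _ _ HY). unfold stoupify_meta in *. simpl.
    destruct (plug c' (zy, Y')) as [zz GG]. simpl in *.
    apply stoupify_app; auto. constructor; auto.
Qed.

Lemma stoupify_ofree L z G :
  stoupify L z G -> fmeta_ofree L = forallb ofree z && forallb tm_ofree G.
Proof.
  unfold fmeta_ofree.
  induction 1; simpl; rewrite ?IHstoupify, ?IHstoupify1, ?IHstoupify2; btauto.
Qed.

Lemma stoupify_nonempty L z G : stoupify L z G -> L <> [] -> G <> [] \/ z <> [].
Proof. destruct 1; intro Hne; try congruence; [left|right|left]; discriminate. Qed.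

Lemma stoupify_emb (X : fmeta) : stoupify X [] (map emb X).
Proof. induction X using fmeta_nested_ind; simpl; constructor; assumption. Qed.

Section FToM.
Variables (cut minus : bool).
Notation md := (mder cut minus).

Lemma mder_ofree T C : md (T, C) -> minus = true -> meta_ofree T = true /\ ofree C = true.
Proof.
  intros H Hm. inversion H as [ps s _ _ Hof Hs]. subst s.
  apply andb_true_iff, (Hof Hm).
Qed.

Lemma mder_by ps T C : mrule cut minus ps (T, C) -> (forall p, In p ps -> md p) ->
  (minus = true -> meta_ofree T = true /\ ofree C = true) -> md (T, C).
Proof.
  intros Hr Hp Ho. apply (mder_rule _ _ ps); auto.
  intro Hm. apply andb_true_iff, (Ho Hm).
Qed.

Lemma mder_by0 T C : mrule cut minus [] (T, C) ->
  (minus = true -> meta_ofree T = true /\ ofree C = true) -> md (T, C).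
Proof. intros; eapply mder_by; eauto. intros p []. Qed.

Lemma mder_by1 p T C : mrule cut minus [p] (T, C) -> md p ->
  (minus = true -> meta_ofree T = true /\ ofree C = true) -> md (T, C).
Proof. intros; eapply mder_by; eauto. intros q [<-|[]]; auto. Qed.

Lemma mder_by2 p1 p2 T C : mrule cut minus [p1; p2] (T, C) -> md p1 -> md p2 ->
  (minus = true -> meta_ofree T = true /\ ofree C = true) -> md (T, C).
Proof. intros; eapply mder_by; eauto. intros q [<-|[<-|[]]]; auto. Qed.

Ltac meta_ofree_from H := let Hm := fresh in
  intro Hm; destruct (mder_ofree _ _ H Hm); split; auto; meta_ofree_auto.

Lemma mder_perm c z z' G C : Permutation z z' ->
  md (plug c (z, G), C) -> md (plug c (z', G), C).
Proof.
  intros Hp H. eapply mder_by1; [apply m_perm; exact Hp | exact H |].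
  intro Hm. destruct (mder_ofree _ _ H Hm) as [H1 H2]. split; [|exact H2].
  rewrite meta_ofree_plug, meta_ofree_pair in *. rewrite <- (forallb_Permutation _ _ _ Hp).
  exact H1.
Qed.

Lemma mder_bangL_front c z A G1 G2 B :
  md (plug c (A :: z, G1 ++ G2), B) -> md (plug c (z, G1 ++ TF (Bang A) :: G2), B).
Proof.
  intro H. apply (mder_perm c _ (z ++ [A])) in H; [|apply Permutation_cons_append].
  eapply mder_by1; [apply m_bangL | exact H | meta_ofree_from H].
Qed.

Lemma mder_bangP_front c z A G1 G2 B :
  md (plug c (z, G1 ++ TF A :: G2), B) -> md (plug c (A :: z, G1 ++ G2), B).
Proof.
  intro H. apply (mder_perm c (z ++ [A])); [apply Permutation_sym, Permutation_cons_append|].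
  eapply mder_by1; [apply m_bangP | exact H | meta_ofree_from H].
Qed.

Lemma mder_bangC_front c z A G1 z' G2 G3 B : (minus = true -> G2 <> [] \/ z' <> []) ->
  md (plug c (A :: z, G1 ++ TB (A :: z') G2 :: G3), B) ->
  md (plug c (A :: z, G1 ++ TB [] [TB z' G2] :: G3), B).
Proof.
  intros Hne H.
  pose (inner Z := plug (ctx_comp c (In_ (A :: z) G1 Hole G3)) (Z, G2)).
  assert (H1 : md (inner (z' ++ [A]), B)).
  { apply (mder_perm _ (A :: z')); [apply Permutation_cons_append|].
    unfold inner. rewrite plug_comp. exact H. }
  unfold inner in H1. rewrite plug_comp in H1. simpl in H1.
  apply (mder_perm c _ (z ++ [A])) in H1; [|apply Permutation_cons_append].
  apply (mder_perm c (z ++ [A])); [apply Permutation_sym, Permutation_cons_append|].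
  eapply mder_by1; [apply m_bangC; exact Hne | exact H1 | meta_ofree_from H1].
Qed.

Lemma stoupify_ih L C T :
  (forall z G, stoupify L z G -> md ((z, G), C)) -> stoupify_meta L T -> md (T, C).
Proof. destruct T; intros H1 H2; apply H1; exact H2. Qed.

Ltac stoupify_inv := repeat match goal with
 | H : stoupify (fplug _ _) _ _ |- _ =>
     let Heq := fresh "Heq" in
     apply stoupify_plug_inv in H as [?c' [?zx [?X' [Heq [?Hs ?Hm]]]]];
     rewrite <- Heq in *; clear Heq
 | H : stoupify (FF _ :: _) _ _ |- _ =>
     let Heq := fresh "Heq" in
     apply stoupify_FF_inv in H as [?z [?G' [?Hs [[-> ->]|[?A0 [Heq [-> ->]]]]]]];
     [| try discriminate Heq; try (injection Heq as Heq); subst]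
 | H : stoupify (FB _ :: _) _ _ |- _ =>
     apply stoupify_FB_inv in H as [?z [?G' [?G' [?Hs [?Hs ->]]]]]
 | H : stoupify [] _ _ |- _ => apply stoupify_nil_inv in H as [-> ->]
 | H : stoupify (?l ++ _) _ _ |- _ => is_var l;
     apply stoupify_app_inv in H as [?z [?z [?G' [?G' [-> [-> [?Hs ?Hs]]]]]]]
 end.

Ltac stoupify_solve := first [ assumption | apply stoupify_nil
  | apply stoupify_keep; stoupify_solve | apply stoupify_stoup; stoupify_solve
  | apply stoupify_in; stoupify_solve
  | apply stoupify_app; stoupify_solve | apply stoupify_app_nil; stoupify_solve ].

Ltac by_ih := match goal with IH : forall z G, stoupify _ z G -> mder _ _ _ |- _ =>
  eapply stoupify_ih; [exact IH | first
    [ match goal with Hm : forall Y zy Y', stoupify Y zy Y' -> stoupify_meta _ _ |- _ =>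
        apply Hm; solve [stoupify_solve] end
    | unfold stoupify_meta; simpl; solve [stoupify_solve] ] ] end.

Ltac meta_ofree_concl := match goal with Hof : minus = true -> _ /\ _ |- _ =>
  let Hm := fresh in intro Hm; destruct (Hof Hm); split; auto; meta_ofree_auto end.

Ltac nonempty_side := match goal with H : stoupify _ _ _ |- _ =>
  let Hm := fresh in intro Hm; eapply stoupify_nonempty; [exact H | auto] end.

Ltac perm_middle :=
  first [ apply Permutation_middle | apply Permutation_sym, Permutation_middle
        | apply Permutation_app_head; perm_middle
        | rewrite !app_assoc;
          first [apply Permutation_middle | apply Permutation_sym, Permutation_middle] ].

Lemma fder_to_mder s : fder cut minus s ->
  forall z G, stoupify (fst s) z G -> md ((z, G), snd s).
Proof.
  induction 1 as [ps s Hr Hps IH Hof]. intros z G Hs.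
  assert (Hof' : minus = true -> meta_ofree (z, G) = true /\ ofree (snd s) = true).
  { intro Hm. specialize (Hof Hm). destruct s as [L C]. apply andb_true_iff in Hof as [H1 H2].
    simpl in *. fold (fmeta_ofree L) in H1. rewrite (stoupify_ofree _ _ _ Hs) in H1. auto. }
  clear Hof. destruct Hr; premises IH; clear IH Hps; simpl in *; stoupify_inv.
  all: try solve [ eapply mder_by0; [econstructor; eauto | meta_ofree_concl]
                 | eapply mder_by1; [econstructor; eauto; nonempty_side | by_ih | meta_ofree_concl]
                 | eapply mder_by2; [econstructor; eauto | by_ih | by_ih | meta_ofree_concl] ].
  - eapply mder_by1; [apply m_bangR | | meta_ofree_concl].
    apply (mder_bangP_front Hole [] A0 [] []). eapply mder_by0; [apply m_ax | meta_ofree_concl].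
  - apply (mder_perm c' (z1 ++ z0 ++ z3)); [apply Permutation_app_swap_app|].
    eapply mder_by2; [apply m_overL | by_ih | by_ih | meta_ofree_concl].
  - apply (mder_perm c' (z2 ++ z0 ++ z1)); [apply Permutation_app_swap_app|].
    eapply mder_by2; [apply m_underL | by_ih | by_ih | meta_ofree_concl].
  - apply mder_bangL_front, mder_bangP_front. by_ih.
  - apply (mder_perm c' (A0 :: z0 ++ z2)); [perm_middle|].
    apply mder_bangP_front. by_ih.
  - rewrite (app_assoc G' G'1). apply mder_bangL_front. rewrite <- app_assoc.
    apply (mder_perm c' (z0 ++ A :: z2 ++ z1)); [perm_middle|]. by_ih.
  - apply (mder_perm c' (z0 ++ A0 :: z2 ++ z1)); [perm_middle|]. by_ih.
  - apply mder_bangL_front.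
    apply (mder_perm c' (z0 ++ z1 ++ A :: z3)); [perm_middle|]. by_ih.
  - apply (mder_perm c' (z0 ++ z1 ++ A0 :: z3)); [perm_middle|]. by_ih.
  - apply (mder_bangL_front Hole [] A [] []).
    eapply mder_by1; [apply m_bangR | by_ih | meta_ofree_concl].
  - apply (mder_bangL_front c' _ A []). apply mder_bangC_front; [nonempty_side | by_ih].
  - apply mder_bangC_front; [nonempty_side | by_ih].
  - apply (mder_perm c' (z2 ++ z0 ++ z3)); [apply Permutation_app_swap_app|].
    eapply mder_by2; [apply m_cut; auto | by_ih | by_ih | meta_ofree_concl].
Qed.

End FToM.

Lemma mder_add_cut minus s : mder false minus s -> mder true minus s.
Proof.
  induction 1 as [ps s Hr Hps IH Hof]. econstructor; eauto.
  destruct Hr; try (constructor; assumption). discriminate.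
Qed.

Theorem proposition1 :
  forall (minus : bool) (X : fmeta) (C : formula),
    (fder false minus (X, C) <-> fder true minus (X, C)) /\
    (fder true minus (X, C) <-> mder true minus (emb_seq (X, C))) /\
    (mder true minus (emb_seq (X, C)) <-> mder false minus (emb_seq (X, C))).
Proof.
  intros minus X C.
  assert (to_m : forall cut, fder cut minus (X, C) -> mder cut minus (emb_seq (X, C)))
    by (intros cut H; exact (fder_to_mder cut minus (X, C) H _ _ (stoupify_emb X))).
  assert (to_f : forall cut, mder cut minus (emb_seq (X, C)) -> fder cut minus (X, C))
    by (intros cut H; rewrite <- (unstoup_emb X); exact (mder_to_fder cut minus _ H)).
  split; [|split]; split.
  - apply fder_add_cut.
  - apply fder_cut_elim.
  - apply to_m.
  - apply to_f.
  - intro H. apply to_m, fder_cut_elim, to_f, H.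
  - apply mder_add_cut.
Qed.
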